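(* Let $\mathcal{F}$ be a finite set of graphs. For every integer $T>0$ and real $\lambda>0$: (i) with $r=\sqrt{T+1}\,n$ and $n\ge r^2/\lambda^2$, $\mathsf{VC}\text{-}\mathsf{dim}\big(\mathbb{H}_{r,\lambda}(\mathcal{E}_{\mathsf{WL},\mathcal{F}}(n,d_T))\big)\in\Theta(r^2/\lambda^2)$; (ii) with $r=\sqrt{T/(T+1)}$ and $n\ge r^2/\lambda^2$, $\mathsf{VC}\text{-}\mathsf{dim}\big(\mathbb{H}_{1,\lambda}(\overline{\mathcal{E}}_{\mathsf{WL},\mathcal{F}}(n,d_T))\big)\in\Theta(1/\lambda^2)$.
   Context: $\mathcal{G}_n$ is the set of (unlabeled, simple, undirected) graphs on $n$ vertices. For a finite set of graphs $\mathcal{F}$, the $1$-WL$_{\mathcal{F}}$ colouring of $G$: $C^{1,\mathcal{F}}_0(v)=(\ell_F(v))_{F\in\mathcal{F}}$, where $\ell_F(v)=1$ if $v$ lies in some $X\subseteq V(G)$ with $G[X]$ isomorphic to $F$ and $0$ otherwise; $C^{1,\mathcal{F}}_t(v)=\mathsf{RELABEL}(C^{1,\mathcal{F}}_{t-1}(v),\{\!\{C^{1,\mathcal{F}}_{t-1}(u):u\in N(v)\}\!\})$ with a fixed injective $\mathsf{RELABEL}$ shared by all graphs. With $\Sigma_t$ the set of colours occurring at round $t$ over all of $\mathcal{G}_n$, $\phi_{\mathcal{F},t}(G)_c$ is the number of vertices of $G$ with colour $c$ at round $t$; $\phi^{(T)}_{\mathsf{WL},\mathcal{F}}(G)=[\phi_{\mathcal{F},0}(G),\dots,\phi_{\mathcal{F},T}(G)]\in\mathbb{R}^{d_T}$,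 and $\overline{\phi^{(T)}_{\mathsf{WL},\mathcal{F}}}$ is its normalisation to unit Euclidean norm. $\mathcal{E}_{\mathsf{WL},\mathcal{F}}(n,d_T)=\{\phi^{(T)}_{\mathsf{WL},\mathcal{F}}\}$, $\overline{\mathcal{E}}_{\mathsf{WL},\mathcal{F}}(n,d_T)=\{\overline{\phi^{(T)}_{\mathsf{WL},\mathcal{F}}}\}$. A sample $(\mathbf{x}_i,y_i)_{i\le s}\subset\mathbb{R}^d\times\{0,1\}$ is $(r,\lambda)$-separable if the $\mathbf{x}_i$ lie in a ball of radius $r$ and the distance between the convex hulls of the two classes is at least $2\lambda$. $\mathbb{H}_{r,\lambda}(\mathcal{E})$ is the set of partial concepts $h:\mathcal{G}_n\to\{0,1,\star\}$ such that every finite list of graphs in $\{G:h(G)\neq\star\}$, labelled by $h$ and embedded by some $\mathrm{emb}\in\mathcal{E}$, is $(r,\lambda)$-separable. VC dimension of a partial concept class: the largest size of a set $\{x_1,\dots,x_m\}$ such that every $\tau\in\{0,1\}^m$ is realised as $h(x_i)=\tau_i$ by some $h$ in the class. *)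

From HB Require Import structures.
From mathcomp Require Import all_boot all_order all_algebra all_fingroup.
From mathcomp Require Import boolp.
From mathcomp Require Import Rstruct.

Set Implicit Arguments. Unset Strict Implicit. Unset Printing Implicit Defensive.
Import Order.TTheory GRing.Theory Num.Theory.
Local Open Scope ring_scope.

Definition is_sgraph n (E : {set 'I_n * 'I_n}) : bool :=
  [forall x, forall y, ((x, y) \in E) == ((y, x) \in E)] && [forall x, (x, x) \notin E].

Definition graph (n : nat) := {E : {set 'I_n * 'I_n} | is_sgraph E}.

Definition adj n (G : graph n) (x y : 'I_n) : bool := (x, y) \in sval G.

Definition giso n (G G' : graph n) : bool :=
  [exists s : {perm 'I_n}, [forall x, forall y, adj G x y == adj G' (s x) (s y)]].

(* unlabelled graphs on n vertices (the set G_n): isomorphism classes *)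
Definition ugraph (n : nat) :=
  {C : {set graph n} | [exists G, C == [set G' | giso G G']]}.

Definition anygraph := {k : nat & graph k}.

(* l_F(v) = 1 iff v lies in some X with G[X] isomorphic to F:
   X is the image of an injective map f : V(F) -> V(G) that is an
   isomorphism F ~ G[X]. *)
Definition inF n (F : anygraph) (G : graph n) (v : 'I_n) : bool :=
  let: existT k H := F in
  [exists f : {ffun 'I_k -> 'I_n},
     [&& injectiveb f,
         [forall i, forall j, adj H i j == adj G (f i) (f j)] &
         v \in codom f]].

(* Colours are trees; RELABEL(c, M) := Node 1 (c :: canonical sorted list of M),
   which is injective in (c, multiset M). *)
Definition colour := GenTree.tree nat.
Definition cle (a b : colour) : bool := (pickle a <= pickle b)%N.
Definition relabel (c : colour) (M : seq colour) : colour :=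
  GenTree.Node 1 (c :: sort cle M).

Fixpoint wl (Fs : seq anygraph) n (G : graph n) (t : nat) (v : 'I_n) : colour :=
  match t with
  | 0 => GenTree.Node 0 [seq GenTree.Leaf (nat_of_bool (inF F G v)) | F <- Fs]
  | t'.+1 => relabel (wl Fs G t' v) [seq wl Fs G t' u | u <- enum 'I_n & adj G v u]
  end.

(* all (round, colour) pairs with round <= T occurring over G_n:
   the disjoint union Sigma_0 + ... + Sigma_T *)
Definition colour_list (Fs : seq anygraph) (n T : nat) : seq (nat * colour) :=
  undup (flatten [seq flatten [seq [seq (t, wl Fs G t v) | v <- enum 'I_n]
                              | G <- enum {: graph n}] | t <- iota 0 T.+1]).

(* coordinate index type, of cardinality d_T *)
Definition cindex (Fs : seq anygraph) (n T : nat) := seq_sub (colour_list Fs n T).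

Definition vec (I : finType) := I -> Rdefinitions.R.

Definition enorm (I : finType) (x : vec I) : Rdefinitions.R := Num.sqrt (\sum_(i : I) x i ^+ 2).
Definition edist (I : finType) (x y : vec I) : Rdefinitions.R := enorm (fun i => x i - y i).

Definition phiL (Fs : seq anygraph) (n T : nat) (G : graph n) : vec (cindex Fs n T) :=
  fun i => (#|[set v : 'I_n | wl Fs G (ssval i).1 v == (ssval i).2]|)%:R.

(* on unlabelled graphs: via any representative (phiL is isomorphism invariant) *)
Definition phi (Fs : seq anygraph) (n T : nat) (C : ugraph n) : vec (cindex Fs n T) :=
  match [pick G in sval C] with Some G => @phiL Fs n T G | None => fun _ => 0 end.

Definition phibar (Fs : seq anygraph) (n T : nat) (C : ugraph n) : vec (cindex Fs n T) :=
  fun i => @phi Fs n T C i / enorm (@phi Fs n T C).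

Definition E_WL (Fs : seq anygraph) (n T : nat) (e : ugraph n -> vec (cindex Fs n T)) : Prop :=
  e = @phi Fs n T.
Definition Ebar_WL (Fs : seq anygraph) (n T : nat) (e : ugraph n -> vec (cindex Fs n T)) : Prop :=
  e = @phibar Fs n T.

Definition in_hull_class (I : finType) s (x : 'I_s -> vec I) (y : 'I_s -> bool)
    (b : bool) (p : vec I) : Prop :=
  exists a : 'I_s -> Rdefinitions.R,
    [/\ forall k, 0 <= a k,
        forall k, y k != b -> a k = 0,
        \sum_(k | y k == b) a k = 1 &
        forall i, p i = \sum_(k | y k == b) a k * x k i].

Definition separable (I : finType) s (x : 'I_s -> vec I) (y : 'I_s -> bool)
    (r lam : Rdefinitions.R) : Prop :=
  (exists c : vec I, forall k, edist (x k) c <= r) /\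
  (forall p q, in_hull_class x y false p -> in_hull_class x y true q ->
     2 * lam <= edist p q).

(* partial concepts: None stands for the undefined value (star) *)
Definition pconcept (X : Type) := X -> option bool.

Definition Hclass (X : Type) (I : finType) (r lam : Rdefinitions.R) (E : (X -> vec I) -> Prop)
    (h : pconcept X) : Prop :=
  forall s (g : 'I_s -> X), (forall k, h (g k) != None) ->
    exists emb, E emb /\ separable (fun k => emb (g k)) (fun k => odflt false (h (g k))) r lam.

Definition shattered (X : finType) (H : pconcept X -> Prop) (S : {set X}) : Prop :=
  forall tau : X -> bool, exists h, H h /\ forall x, x \in S -> h x = Some (tau x).

Definition VCdim (X : finType) (H : pconcept X -> Prop) : nat :=
  \max_(S : {set X} | `[< shattered H S >]) #|S|.

(* Upper bound, for any fixed embedding with image in a ball of radius r: pair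
   up 2p shattered points and choose signs greedily so that
   |sum_j +-(x_j - x'_j)|^2 <= sum_j |x_j - x'_j|^2 <= 4 p r^2.  Labelling each
   pair according to its sign, the two class means differ by
   (1/p) sum_j +-(x_j - x'_j), so (2 lam)^2 <= 4 r^2 / p, i.e. p <= r^2 / lam^2.
   Lower bound: the circulant graph C_k (i ~ j iff their cyclic distance is at
   most k) is vertex transitive, so 1-WL gives all its vertices the same colour
   in every round, and from round 1 on this colour determines the degree, which
   is strictly increasing in k <= (n+1)/2.  The embeddings of C_0, ..., C_(m-1)
   are thus alpha times indicators of pairwise disjoint sets of T coordinates;
   for convex combinations P, Q of two disjoint groups of them, Cauchy-Schwarz
   gives |P - Q|^2 >= 4 T alpha^2 / m, so all m are shattered as soon as
   m lam^2 <= T alpha^2. *)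

From HB Require Import structures.
From mathcomp Require Import all_boot all_order all_algebra all_fingroup.
From mathcomp Require Import boolp Rstruct.
From mathcomp Require Import ring lra zify.
Set Implicit Arguments. Unset Strict Implicit. Unset Printing Implicit Defensive.
Import Order.TTheory GRing.Theory Num.Theory.
Local Open Scope ring_scope.

Notation R := Rdefinitions.R.

Section Euclid.
Variable I : finType.
Implicit Types (x y : vec I) (r : R).

Definition sqnorm x : R := \sum_i x i ^+ 2.

Lemma sqnorm_ge0 x : 0 <= sqnorm x.
Proof. by apply: sumr_ge0 => i _; rewrite sqr_ge0. Qed.

Lemma sqr_enorm x : enorm x ^+ 2 = sqnorm x.
Proof. exact/sqr_sqrtr/sqnorm_ge0. Qed.

Lemma enorm_ge0 x : 0 <= enorm x.
Proof. exact: sqrtr_ge0. Qed.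

Lemma sqnormD x y :
  sqnorm (fun i => x i + y i) = sqnorm x + 2 * \sum_i x i * y i + sqnorm y.
Proof. by rewrite /sqnorm mulr_sumr -!big_split /=; apply: eq_bigr => i _; ring. Qed.

Lemma sqnormZ (c : R) x : sqnorm (fun i => c * x i) = c ^+ 2 * sqnorm x.
Proof. by rewrite /sqnorm mulr_sumr; apply: eq_bigr => i _; rewrite exprMn. Qed.

Lemma sqnorm_sub_le x y (z : vec I) :
  sqnorm (fun i => x i - y i) <=
  2 * sqnorm (fun i => x i - z i) + 2 * sqnorm (fun i => y i - z i).
Proof.
rewrite /sqnorm !mulr_sumr -big_split /=; apply: ler_sum => i _.
have := sqr_ge0 (x i + y i - 2 * z i); nra.
Qed.

Lemma edist_le r x y : 0 <= r ->
  (edist x y <= r) = (sqnorm (fun i => x i - y i) <= r ^+ 2).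
Proof.
by move=> r0; rewrite /edist /enorm -[r in LHS]ger0_norm // -sqrtr_sqr ler_sqrt ?sqr_ge0.
Qed.

Lemma le_edist r x y : 0 <= r ->
  (r <= edist x y) = (r ^+ 2 <= sqnorm (fun i => x i - y i)).
Proof.
by move=> r0; rewrite /edist /enorm -[r in LHS]ger0_norm // -sqrtr_sqr ler_sqrt ?sqnorm_ge0.
Qed.

Lemma edistr0 x : edist x (fun=> 0) = enorm x.
Proof. by rewrite /edist; congr enorm; apply: funext => i; rewrite subr0. Qed.

Lemma enorm_normalized x : enorm x != 0 -> enorm (fun i => x i / enorm x) = 1.
Proof.
move=> x0; rewrite {1}/enorm (eq_bigr (fun i => (enorm x)^-1 ^+ 2 * x i ^+ 2)).
  by rewrite -mulr_sumr -/(sqnorm x) -sqr_enorm -exprMn mulVf // expr1n sqrtr1.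
by move=> i _; rewrite mulrC exprMn.
Qed.

Definition signed_sum p (s : 'I_p -> bool) (u : 'I_p -> vec I) : vec I :=
  fun i => \sum_j (-1) ^+ s j * u j i.

Lemma sqnorm_add_sign_le x y :
  exists b : bool, sqnorm (fun i => x i + (-1) ^+ b * y i) <= sqnorm x + sqnorm y.
Proof.
set d := \sum_i x i * y i.
exists (0 < d)%R; rewrite sqnormD sqnormZ sqrr_sign mul1r.
have -> : \sum_i x i * ((-1) ^+ (0 < d)%R * y i) = (-1) ^+ (0 < d)%R * d.
  by rewrite mulr_sumr; apply: eq_bigr => i _; rewrite mulrCA.
by case: ltrP => d0; rewrite ?expr1 ?expr0; lra.
Qed.

Lemma exists_signed_sum_sqnorm_le p (u : 'I_p -> vec I) :
  exists s, sqnorm (signed_sum s u) <= \sum_j sqnorm (u j).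
Proof.
elim: p u => [|p IHp] u.
  exists (fun=> false); rewrite big_ord0 /sqnorm big1 // => i _.
  by rewrite /signed_sum big_ord0 expr0n.
have [s le_s] := IHp (fun j => u (lift ord0 j)).
have [b le_b] := sqnorm_add_sign_le (signed_sum s (fun j => u (lift ord0 j))) (u ord0).
exists (fun k => oapp s b (unlift ord0 k)).
have -> : signed_sum (fun k => oapp s b (unlift ord0 k)) u =
          (fun i => signed_sum s (fun j => u (lift ord0 j)) i + (-1) ^+ b * u ord0 i).
  apply: funext => i; rewrite /signed_sum big_ord_recl /= unlift_none addrC.
  by congr (_ + _); apply: eq_bigr => j _; rewrite liftK.
by rewrite big_ord_recl addrC; apply: le_trans le_b _; rewrite lerD2r.
Qed.

End Euclid.

Section PairedPoints.
Variables (I : finType) (p : nat) (x : 'I_(p + p) -> vec I).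

Definition pair_label (s : 'I_p -> bool) (k : 'I_(p + p)) : bool :=
  match split k with inl j => s j | inr j => ~~ s j end.

Lemma pair_label_lshift s j : pair_label s (lshift p j) = s j.
Proof. by rewrite /pair_label -[lshift p j]/(unsplit (inl j)) unsplitK. Qed.

Lemma pair_label_rshift s j : pair_label s (rshift p j) = ~~ s j.
Proof. by rewrite /pair_label -[rshift p j]/(unsplit (inr j)) unsplitK. Qed.

Definition class_mean (y : 'I_(p + p) -> bool) (b : bool) : vec I :=
  fun i => p%:R^-1 * \sum_(k | y k == b) x k i.

Lemma pair_mean_in_hull s b : (0 < p)%N ->
  in_hull_class x (pair_label s) b (class_mean (pair_label s) b).
Proof.
move=> p_gt0; exists (fun k => if pair_label s k == b then p%:R^-1 else 0); split.
- by move=> k; case: ifP => _ //; rewrite invr_ge0 ler0n.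
- by move=> k /negbTE ->.
- rewrite big_mkcond big_split_ord /= -big_split /= (eq_bigr (fun=> p%:R^-1)).
    by rewrite sumr_const card_ord -[_ *+ p]mulr_natr mulVf // pnatr_eq0 -lt0n.
  move=> j _; rewrite pair_label_lshift pair_label_rshift.
  by case: (s j); case: b; rewrite /= ?addr0 ?add0r.
- by move=> i; rewrite /class_mean mulr_sumr; apply: eq_bigr => k ->.
Qed.

Lemma class_means_sub s i :
  class_mean (pair_label s) false i - class_mean (pair_label s) true i =
  p%:R^-1 * signed_sum s (fun j i => x (lshift p j) i - x (rshift p j) i) i.
Proof.
rewrite /class_mean -mulrBr !(big_mkcond (fun k => pair_label s k == _)).
rewrite !big_split_ord /= -!big_split -sumrB /=; congr (_ * _); apply: eq_bigr => j _.
by rewrite pair_label_lshift pair_label_rshift; case: (s j) => /=; ring.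
Qed.

Lemma pairs_separable_le (r lam : R) : (0 < p)%N -> 0 <= lam ->
  (forall s, separable x (pair_label s) r lam) -> p%:R * lam ^+ 2 <= r ^+ 2.
Proof.
move=> p_gt0 lam_ge0 sep.
set u := fun j i => x (lshift p j) i - x (rshift p j) i.
have [s le_s] := exists_signed_sum_sqnorm_le u.
have [[c in_ball] far] := sep s.
have r_ge0 : 0 <= r := le_trans (enorm_ge0 _) (in_ball (lshift p (Ordinal p_gt0))).
have le_u j : sqnorm (u j) <= 4 * r ^+ 2.
  apply: le_trans (sqnorm_sub_le _ _ c) _.
  have := in_ball (lshift p j); have := in_ball (rshift p j).
  rewrite !edist_le // => ? ?; lra.
have := far _ _ (pair_mean_in_hull s false p_gt0) (pair_mean_in_hull s true p_gt0).
rewrite le_edist ?mulr_ge0 // (funext (class_means_sub s)) sqnormZ.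
have {}le_s : sqnorm (signed_sum s u) <= p%:R * (4 * r ^+ 2).
  apply: le_trans le_s (le_trans (ler_sum _ (fun j _ => le_u j)) _).
  by rewrite sumr_const card_ord -[_ *+ p]mulr_natl.
have p_pos : 0 < p%:R :> R by rewrite ltr0n.
rewrite exprVn [_ * sqnorm _]mulrC ler_pdivlMr ?exprn_gt0 // => le_sep.
have := le_trans le_sep le_s; nra.
Qed.

End PairedPoints.

Section ShatteredSets.
Variables (X I : finType) (f : X -> vec I) (r lam : R).

Lemma shattered_separable (S : {set X}) s (g : 'I_s -> X) (y : 'I_s -> bool) :
  shattered (Hclass r lam (fun e => e = f)) S -> injective g -> (forall k, g k \in S) ->
  separable (fun k => f (g k)) y r lam.
Proof.
move=> shS g_inj gS.
have [h [Hh hS]] := shS (fun z => [exists k, (g k == z) && y k]).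
have hg k : h (g k) = Some (y k).
  rewrite hS //; congr Some; apply/existsP/idP => [[k' /andP[/eqP/g_inj -> //]]|yk].
  by exists k; rewrite eqxx.
have h_def k : h (g k) != None by rewrite hg.
have [_ [-> sep]] := Hh s g h_def.
by have <- : (fun k => odflt false (h (g k))) = y by apply: funext => k; rewrite hg.
Qed.

Lemma card_shattered_le (S : {set X}) : 0 < lam ->
  shattered (Hclass r lam (fun e => e = f)) S -> #|S|%:R <= 2 * (r ^+ 2 / lam ^+ 2) + 1.
Proof.
move=> lam_gt0 shS.
have ratio_ge0 : 0 <= r ^+ 2 / lam ^+ 2 by rewrite divr_ge0 ?sqr_ge0.
set p := #|S|./2.
have cardS : #|S| = (odd #|S| + (p + p))%N by rewrite addnn odd_double_half.
have odd_le1 : (odd #|S|)%:R <= 1 :> R by case: odd.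
have [p0|p_gt0] := posnP p.
  by rewrite cardS p0 !addn0; lra.
have le2p : (p + p <= #|S|)%N by rewrite [X in (_ <= X)%N]cardS leq_addl.
pose g k := enum_val (widen_ord le2p k) : X.
have g_inj : injective g.
  by move=> k k' /enum_val_inj /(congr1 val) /= eq_kk'; apply: val_inj.
have gS k : g k \in S by apply: enum_valP.
have := pairs_separable_le p_gt0 (ltW lam_gt0)
  (fun s => shattered_separable (pair_label s) shS g_inj gS).
rewrite -ler_pdivlMr ?exprn_gt0 // cardS !natrD; lra.
Qed.

Lemma VCdim_le : 0 < lam -> 1 <= r ^+ 2 / lam ^+ 2 ->
  (VCdim (Hclass r lam (fun e => e = f)))%:R <= 3 * (r ^+ 2 / lam ^+ 2).
Proof.
move=> lam_gt0 ratio_ge1; apply: (big_ind (fun v : nat => v%:R <= _)).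
- lra.
- by move=> a b ? ?; rewrite /maxn; case: ifP.
- by move=> S /asboolP /(card_shattered_le lam_gt0); lra.
Qed.

End ShatteredSets.

Lemma sqr_sum_le m (z : 'I_m -> R) : (\sum_k z k) ^+ 2 <= m%:R * \sum_k z k ^+ 2.
Proof.
case: m z => [|m] z; first by rewrite !big_ord0 expr0n mul0r.
set Z := \sum_k z k; set Q := \sum_k z k ^+ 2.
have : 0 <= \sum_k (m.+1%:R * z k - Z) ^+ 2 by apply: sumr_ge0 => k _; rewrite sqr_ge0.
have -> : \sum_k (m.+1%:R * z k - Z) ^+ 2 = m.+1%:R * (m.+1%:R * Q - Z ^+ 2).
  rewrite (eq_bigr (fun k => m.+1%:R ^+ 2 * z k ^+ 2 + (- (2 * m.+1%:R * Z) * z k + Z ^+ 2)));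
    last by move=> k _; ring.
  rewrite !big_split /= sumr_const card_ord -!mulr_sumr -/Z -/Q -mulr_natr; ring.
by rewrite pmulr_rge0 ?ltr0n // subr_ge0.
Qed.

Lemma disjoint_weights_sum_sqr_ge m (w w' : 'I_m -> R) :
  (forall k, w k * w' k = 0) -> \sum_k w k = 1 -> \sum_k w' k = 1 ->
  4 <= m%:R * \sum_k (w k - w' k) ^+ 2.
Proof.
move=> disj w1 w'1.
have -> : \sum_k (w k - w' k) ^+ 2 = \sum_k (w k + w' k) ^+ 2.
  by apply: eq_bigr => k _; rewrite sqrrB sqrrD disj mul0rn subr0 addr0.
by have := sqr_sum_le (fun k => w k + w' k); rewrite big_split /= w1 w'1; lra.
Qed.

Lemma sum_comp_inj_le (J I : finType) (h : J -> I) (F : I -> R) :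
  injective h -> (forall i, 0 <= F i) -> \sum_j F (h j) <= \sum_i F i.
Proof.
move=> h_inj F_ge0; rewrite -(big_imset _ (in2W h_inj)) /= [X in _ <= X](bigID [in h @: J]) /=.
by rewrite lerDl sumr_ge0.
Qed.

Section Spikes.
Variables (X I : finType) (T m : nat) (emb : X -> vec I) (pt : 'I_m -> X).
Variables (coord : 'I_T * 'I_m -> I) (alpha : R).
Hypothesis pt_inj : injective pt.
Hypothesis coord_inj : injective coord.
Hypothesis emb_spike :
  forall t k k', emb (pt k') (coord (t, k)) = if k' == k then alpha else 0.

Lemma hull_spike_weights s (g : 'I_s -> X) (Y : X -> bool) b (P : vec I) :
  (forall j, exists k, g j = pt k) ->
  in_hull_class (fun j => emb (g j)) (fun j => Y (g j)) b P ->
  exists w : 'I_m -> R, [/\ forall k, Y (pt k) != b -> w k = 0, \sum_k w k = 1 &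
                           forall t k, P (coord (t, k)) = alpha * w k].
Proof.
move=> g_pt [a [_ a_out a1 aP]].
have sum_at_pt j (c : R) : \sum_k (if g j == pt k then c else 0) = c.
  have [k0 ->] := g_pt j; rewrite (bigD1 k0) //= eqxx big1 ?addr0 // => k k_neq.
  by rewrite (inj_eq pt_inj) eq_sym (negbTE k_neq).
exists (fun k => \sum_j (if g j == pt k then a j else 0)); split.
- move=> k Yk; apply: big1 => j _; case: eqP => // gj.
  by apply: a_out; rewrite gj.
- rewrite exchange_big /= (eq_bigr _ (fun j _ => sum_at_pt j (a j))) -a1.
  by rewrite [RHS]big_rmcond // => j /a_out.
- move=> t k; rewrite aP big_rmcond => [|j /a_out ->]; last by rewrite mul0r.
  rewrite mulr_sumr; apply: eq_bigr => j _; have [k' gj] := g_pt j.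
  by rewrite gj emb_spike (inj_eq pt_inj); case: eqP; rewrite ?mulr0 ?mulr1 // mulrC.
Qed.

Lemma spike_hulls_far s (g : 'I_s -> X) (Y : X -> bool) (P Q : vec I) :
  (forall j, exists k, g j = pt k) ->
  in_hull_class (fun j => emb (g j)) (fun j => Y (g j)) false P ->
  in_hull_class (fun j => emb (g j)) (fun j => Y (g j)) true Q ->
  4 * (T%:R * alpha ^+ 2) <= m%:R * sqnorm (fun i => P i - Q i).
Proof.
move=> g_pt /(hull_spike_weights g_pt) [w [w_out w1 wP]].
move=> /(hull_spike_weights g_pt) [w' [w'_out w'1 w'Q]].
have disj k : w k * w' k = 0.
  by case: (boolP (Y (pt k))) => Yk;
    [rewrite w_out ?mul0r ?Yk | rewrite w'_out ?mulr0 ?(negbTE Yk)].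
have spikes_le : T%:R * alpha ^+ 2 * \sum_k (w k - w' k) ^+ 2 <= sqnorm (fun i => P i - Q i).
  apply: le_trans _ (sum_comp_inj_le (F := fun i => (P i - Q i) ^+ 2) coord_inj _) => [|i];
    last exact: sqr_ge0.
  rewrite (eq_bigr (fun p => alpha ^+ 2 * (w p.2 - w' p.2) ^+ 2)) => [|[t k] _];
    last by rewrite wP w'Q -mulrBr exprMn.
  rewrite -(pair_bigA _ (fun _ k => alpha ^+ 2 * (w k - w' k) ^+ 2)) /=.
  by rewrite sumr_const card_ord -mulr_sumr -mulrA mulr_natl.
have A_ge0 : 0 <= T%:R * alpha ^+ 2 by rewrite mulr_ge0 ?sqr_ge0.
have := ler_wpM2l A_ge0 (disjoint_weights_sum_sqr_ge disj w1 w'1).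
have := ler_wpM2l (ler0n R m) spikes_le.
lra.
Qed.

Lemma VCdim_spikes_ge (r lam : R) : 0 <= lam -> (forall k, enorm (emb (pt k)) <= r) ->
  lam ^+ 2 * m%:R <= T%:R * alpha ^+ 2 ->
  (m <= VCdim (Hclass r lam (fun e => e = emb)))%N.
Proof.
move=> lam_ge0 pt_in_ball lam_m.
have [->|m_gt0] := posnP m; first exact: leq0n.
set S := [set pt k | k in [set: 'I_m]].
have cardS : #|S| = m by rewrite card_imset // cardsT card_ord.
rewrite -{1}cardS; apply: (leq_bigmax_cond (F := fun S : {set X} => #|S|)).
apply/asboolP => tau.
exists (fun x => if x \in S then Some (tau x) else None); split; last by move=> x ->.
move=> s g g_def; exists emb; split => //.
have g_pt j : exists k, g j = pt k.
  by move: (g_def j); case: ifP => // /imsetP [k _ ->]; exists k.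
split=> [|P Q HP HQ].
  by exists (fun=> 0) => j; have [k ->] := g_pt j; rewrite edistr0.
pose Y x := odflt false (if x \in S then Some (tau x) else None).
have := spike_hulls_far (Y := Y) g_pt HP HQ; rewrite le_edist ?mulr_ge0 //.
have m_pos : 0 < m%:R :> R by rewrite ltr0n.
set N := sqnorm _; nra.
Qed.

End Spikes.

Local Close Scope ring_scope.

Definition perm_iso n (G G' : graph n) (s : {perm 'I_n}) : Prop :=
  forall x y, adj G x y = adj G' (s x) (s y).

Lemma perm_isoV n (G G' : graph n) s : perm_iso G G' s -> perm_iso G' G (s^-1)%g.
Proof. by move=> iso_s x y; rewrite iso_s !permKV. Qed.

Lemma inF_perm_iso_imply (F : anygraph) n (G G' : graph n) s v :
  perm_iso G G' s -> inF F G v -> inF F G' (s v).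
Proof.
case: F => k H /= iso_s /existsP [f /and3P [f_inj /forallP f_iso v_im]].
apply/existsP; exists [ffun i => s (f i)]; apply/and3P; split.
- apply/injectiveP => i j; rewrite !ffunE => /perm_inj; exact: (injectiveP _ f_inj).
- apply/forallP => i; apply/forallP => j; rewrite !ffunE -iso_s.
  by move/forallP: (f_iso i) => /(_ j).
- by case/codomP: v_im => i ->; apply/codomP; exists i; rewrite ffunE.
Qed.

Lemma inF_perm_iso (F : anygraph) n (G G' : graph n) s v :
  perm_iso G G' s -> inF F G v = inF F G' (s v).
Proof.
move=> iso_s; apply/idP/idP; first exact: inF_perm_iso_imply.
by move/(inF_perm_iso_imply (perm_isoV iso_s)); rewrite permK.
Qed.

Lemma cle_total : total cle.
Proof. by move=> a b; rewrite /cle leq_total. Qed.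

Lemma cle_trans : transitive cle.
Proof. by move=> b a c; rewrite /cle; apply: leq_trans. Qed.

Lemma cle_anti : antisymmetric cle.
Proof. by move=> a b /anti_leq; apply: (pcan_inj pickleK). Qed.

Lemma wl_perm_iso Fs n (G G' : graph n) s : perm_iso G G' s ->
  forall t v, wl Fs G t v = wl Fs G' t (s v).
Proof.
move=> iso_s; elim=> [|t IHt] v /=.
  by congr GenTree.Node; apply: eq_map => F; rewrite (inF_perm_iso _ _ iso_s).
rewrite /relabel IHt; congr (GenTree.Node 1 (_ :: _)).
apply/(perm_sortP cle_total cle_trans cle_anti).
rewrite (eq_map IHt) map_comp; apply: perm_map.
apply: uniq_perm.
- by rewrite (map_inj_uniq (@perm_inj _ s)) filter_uniq ?enum_uniq.
- by rewrite filter_uniq ?enum_uniq.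
move=> u; rewrite mem_filter mem_enum andbT; apply/mapP/idP => [[w]|adj_vu].
  by rewrite mem_filter mem_enum andbT iso_s => adj_vw ->.
by exists ((s^-1)%g u); rewrite ?permKV // mem_filter mem_enum andbT iso_s permKV.
Qed.

Definition deg n (G : graph n) (v : 'I_n) : nat := #|[set u | adj G v u]|.

Lemma deg_perm_iso n (G G' : graph n) s v : perm_iso G G' s -> deg G v = deg G' (s v).
Proof.
move=> iso_s; rewrite /deg -[RHS](card_preimset _ (@perm_inj _ s)).
by apply: eq_card => u; rewrite !inE iso_s.
Qed.

Lemma size_neighbours n (G : graph n) v : size [seq u <- enum 'I_n | adj G v u] = deg G v.
Proof.
rewrite /deg cardsE cardE /enum_mem -filter_predI; congr size.
by apply: eq_filter => u /=; rewrite andbT.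
Qed.

Lemma wl_succ_deg Fs n (G G' : graph n) t v v' :
  wl Fs G t.+1 v = wl Fs G' t.+1 v' -> deg G v = deg G' v'.
Proof. by move=> [_ /(congr1 size)]; rewrite !size_sort !size_map !size_neighbours. Qed.

Definition cdist n (x y : 'I_n) : nat := minn ((x + n - y) %% n) ((y + n - x) %% n).

Definition circ_edges n k : {set 'I_n * 'I_n} :=
  [set e | (e.1 != e.2) && (cdist e.1 e.2 <= k)].

Lemma circ_sgraph n k : is_sgraph (circ_edges n k).
Proof.
apply/andP; split; last by apply/forallP => x; rewrite !inE /= eqxx.
apply/forallP => x; apply/forallP => y.
by rewrite !inE /= [y == x]eq_sym /cdist [minn ((y + n - x) %% n) _]minnC.
Qed.

Definition circ n k : graph n := exist _ (circ_edges n k) (circ_sgraph n k).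

Lemma adj_circ n k x y : adj (circ n k) x y = (x != y) && (cdist x y <= k).
Proof. by rewrite /adj inE. Qed.

Lemma modn_succ_sub n a b : a < n -> b < n ->
  (a.+1 %% n + n - b.+1 %% n) %% n = (a + n - b) %% n.
Proof.
move=> a_lt b_lt.
have eq_mod X Y : [\/ X = Y, X = Y + n | Y = X + n] -> X %% n = Y %% n.
  by case=> ->; rewrite ?modnDr.
apply: eq_mod; case: (ltnP a.+1 n) => Ha; case: (ltnP b.+1 n) => Hb.
- by rewrite !modn_small //; constructor 1; lia.
- have -> : b.+1 = n by lia.
  by rewrite modnn (modn_small Ha); constructor 2; lia.
- have -> : a.+1 = n by lia.
  by rewrite modnn (modn_small Hb); constructor 3; lia.
- have -> : a.+1 = n by lia.
  have -> : b.+1 = n by lia.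
  by rewrite modnn; constructor 1; lia.
Qed.

Definition rot n : {perm 'I_n} := perm (@ordS_inj n).

Lemma rot_perm_iso n k : perm_iso (circ n k) (circ n k) (rot n).
Proof.
by move=> x y; rewrite !adj_circ !permE (inj_eq (@ordS_inj n)) /cdist /= !modn_succ_sub.
Qed.

Lemma rot_invariant_const n (A : Type) (f : 'I_n.+1 -> A) :
  (forall v, f (rot n.+1 v) = f v) -> forall v, f v = f ord0.
Proof.
move=> f_rot [j]; elim: j => [|j IHj] lt_j; first by congr f; apply: val_inj.
have lt_j' : j < n.+1 by apply: ltnW.
rewrite -(IHj lt_j') -(f_rot (Ordinal lt_j')); congr f; apply: val_inj.
by rewrite permE /= modn_small.
Qed.

Lemma wl_circ_const Fs n k t v : wl Fs (circ n.+1 k) t v = wl Fs (circ n.+1 k) t ord0.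
Proof.
by apply: rot_invariant_const => u; rewrite -(wl_perm_iso Fs (@rot_perm_iso n.+1 k)).
Qed.

Lemma deg_circ_const n k v : deg (circ n.+1 k) v = deg (circ n.+1 k) ord0.
Proof.
by apply: rot_invariant_const => u; rewrite -(deg_perm_iso _ (@rot_perm_iso n.+1 k)).
Qed.

Lemma deg_circ_lt n k k' : k < k' -> 2 * k' <= n.+1 ->
  deg (circ n.+1 k) ord0 < deg (circ n.+1 k') ord0.
Proof.
move=> lt_kk' le_k'n.
have lt_k'n : k' < n.+1 by lia.
have dist_k' : cdist (ord0 : 'I_n.+1) (Ordinal lt_k'n) = k'.
  rewrite /cdist /= add0n subn0 modnDr (modn_small lt_k'n) modn_small; last by lia.
  by apply/minn_idPr; lia.
apply: proper_card; apply/properP; split.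
  apply/subsetP => u; rewrite !inE !adj_circ => /andP[-> le_k] /=.
  exact: leq_trans le_k (ltnW lt_kk').
exists (Ordinal lt_k'n); rewrite !inE !adj_circ dist_k' ?leqnn ?andbT.
  by apply/eqP => /(congr1 val) /=; lia.
by rewrite negb_and leqNgt lt_kk' orbT.
Qed.

Lemma deg_circ_inj n k k' : 2 * k <= n.+1 -> 2 * k' <= n.+1 ->
  deg (circ n.+1 k) ord0 = deg (circ n.+1 k') ord0 -> k = k'.
Proof.
move=> le_kn le_k'n eq_deg.
case: (ltngtP k k') => // lt_k.
- by have := deg_circ_lt lt_k le_k'n; rewrite eq_deg ltnn.
- by have := deg_circ_lt lt_k le_kn; rewrite eq_deg ltnn.
Qed.

Lemma mem_colour_list Fs n T (G : graph n) t v :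
  t <= T -> (t, wl Fs G t v) \in colour_list Fs n T.
Proof.
move=> le_tT; rewrite mem_undup; apply/flatten_mapP; exists t.
  by rewrite mem_iota add0n ltnS.
apply/flatten_mapP; exists G; first by rewrite mem_enum.
by apply: (map_f (fun v => (t, wl Fs G t v))); rewrite mem_enum.
Qed.

Lemma colour_list_round Fs n T c : c \in colour_list Fs n T -> c.1 <= T.
Proof.
rewrite mem_undup => /flatten_mapP [t]; rewrite mem_iota add0n ltnS => /andP[_ le_tT].
by move=> /flatten_mapP [G _] /mapP [v _ ->].
Qed.

Lemma giso_refl n (G : graph n) : giso G G.
Proof.
by apply/existsP; exists 1%g; apply/forallP => x; apply/forallP => y; rewrite !perm1.
Qed.

Lemma uclass_subproof n (G : graph n) :
  [exists G0, [set G' | giso G G'] == [set G' | giso G0 G']].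
Proof. by apply/existsP; exists G. Qed.

Definition uclass n (G : graph n) : ugraph n :=
  exist _ [set G' | giso G G'] (uclass_subproof G).

Lemma mem_uclass n (G G' : graph n) :
  G' \in sval (uclass G) -> exists s, perm_iso G G' s.
Proof.
rewrite inE => /existsP [s /forallP iso_s]; exists s => x y; apply/eqP.
by move/forallP: (iso_s x) => /(_ y).
Qed.

Definition wl_uniform Fs n (G : graph n) (c : nat -> colour) : Prop :=
  forall t v, wl Fs G t v = c t.

Lemma wl_uniform_uclass Fs n (G G' : graph n) c :
  wl_uniform Fs G c -> G' \in sval (uclass G) -> wl_uniform Fs G' c.
Proof.
move=> unif_G /mem_uclass [s iso_s] t v.
by rewrite -(permKV s v) -(wl_perm_iso Fs iso_s); apply: unif_G.
Qed.

Local Open Scope ring_scope.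

Section UniformGraph.
Variables (Fs : seq anygraph) (n T : nat) (G : graph n) (c : nat -> colour).
Hypothesis unif_G : wl_uniform Fs G c.

Lemma phi_uclass i :
  @phi Fs n T (uclass G) i = if (ssval i).2 == c (ssval i).1 then n%:R else 0.
Proof.
rewrite /phi; case: pickP => [G' G'_in | no_rep];
  last by have := no_rep G; rewrite inE giso_refl.
have unif_G' := wl_uniform_uclass unif_G G'_in.
rewrite /phiL; case: eqP => c_i.
  have -> : [set v | wl Fs G' (ssval i).1 v == (ssval i).2] = setT.
    by apply/setP => v; rewrite !inE unif_G' c_i eqxx.
  by rewrite cardsT card_ord.
have -> : [set v | wl Fs G' (ssval i).1 v == (ssval i).2] = set0.
  by apply/setP => v; rewrite !inE unif_G'; apply/negbTE/eqP => eq_c; apply: c_i.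
by rewrite cards0.
Qed.

(* [v0] only witnesses [n > 0]; the empty graph contributes no colours. *)
Lemma card_uniform_coords (v0 : 'I_n) :
  #|[set i : cindex Fs n T | (ssval i).2 == c (ssval i).1]| = T.+1.
Proof.
pose f (t : 'I_T.+1) : cindex Fs n T := SeqSub (mem_colour_list Fs G v0 (ltnSE (ltn_ord t))).
have f_inj : injective f by move=> t t' /(congr1 (fun i => (ssval i).1)) /val_inj.
rewrite -[T.+1]card_ord -cardsT -(card_imset _ f_inj); apply: eq_card => i.
rewrite inE; apply/eqP/imsetP => [c_i|[t _ ->]]; last by rewrite /= unif_G.
have lt_i : ((ssval i).1 < T.+1)%N by rewrite ltnS (colour_list_round (ssvalP i)).
exists (Ordinal lt_i); rewrite ?inE //; apply: val_inj => /=.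
by rewrite unif_G -c_i; case: (ssval i).
Qed.

Lemma enorm_phi_uclass (v0 : 'I_n) :
  enorm (@phi Fs n T (uclass G)) = n%:R * Num.sqrt T.+1%:R.
Proof.
rewrite /enorm (eq_bigr (fun i => if (ssval i).2 == c (ssval i).1 then n%:R ^+ 2 else 0));
  last by move=> i _; rewrite phi_uclass; case: ifP; rewrite ?expr0n.
rewrite -big_mkcond sumr_const /= (_ : #|_| = T.+1); last first.
  by rewrite -(card_uniform_coords v0); apply: eq_card => i; rewrite inE.
by rewrite -[_ *+ T.+1]mulr_natr sqrtrM ?sqr_ge0 // sqrtr_sqr ger0_norm.
Qed.

End UniformGraph.

Lemma wl_uniform_circ Fs n k :
  wl_uniform Fs (circ n.+1 k) (fun t => wl Fs (circ n.+1 k) t ord0).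
Proof. by move=> t v; apply: wl_circ_const. Qed.

Definition circ_class n m (k : 'I_m) : ugraph n.+1 := uclass (circ n.+1 k).

(* Rounds 1 to T only: the round-0 colours merely record which graphs of [Fs]
   occur around a vertex and need not separate the [circ n.+1 k]. *)
Definition circ_coord Fs n T m (p : 'I_T * 'I_m) : cindex Fs n.+1 T :=
  SeqSub (mem_colour_list Fs (circ n.+1 p.2) ord0 (ltn_ord p.1)).

Section CirculantFamily.
Variables (Fs : seq anygraph) (n T m : nat).
Hypothesis le_m : (2 * m <= n.+1)%N.

Lemma le_double_ord (k : 'I_m) : (2 * k <= n.+1)%N.
Proof. by have := ltn_ord k; lia. Qed.

Lemma circ_class_inj : injective (@circ_class n m).
Proof.
move=> k k' eq_kk'.
have : circ n.+1 k' \in sval (circ_class n k) by rewrite eq_kk' /= inE giso_refl.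
move=> /mem_uclass [s iso_s]; apply: val_inj.
apply: deg_circ_inj (le_double_ord k) (le_double_ord k') _.
by rewrite (deg_perm_iso ord0 iso_s) deg_circ_const.
Qed.

Lemma circ_colour_inj t (k k' : 'I_m) :
  wl Fs (circ n.+1 k) t.+1 ord0 = wl Fs (circ n.+1 k') t.+1 ord0 -> k = k'.
Proof.
move/wl_succ_deg => eq_deg; apply: val_inj.
exact: deg_circ_inj (le_double_ord k) (le_double_ord k') eq_deg.
Qed.

Lemma circ_coord_inj : injective (@circ_coord Fs n T m).
Proof.
move=> [t k] [t' k'] /(congr1 (@ssval _ _)) eq_coord.
have eq_t : t = t' by apply: val_inj; case: (congr1 fst eq_coord).
by subst t'; move: (congr1 snd eq_coord) => /circ_colour_inj /= ->.
Qed.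

Lemma phi_circ_spike t (k k' : 'I_m) :
  @phi Fs n.+1 T (circ_class n k') (circ_coord Fs n (t, k)) =
  if k' == k then n.+1%:R else 0.
Proof.
rewrite (phi_uclass (@wl_uniform_circ Fs n k')) /=.
by congr (if _ then _ else _); apply/eqP/eqP => [/circ_colour_inj | ->].
Qed.

Lemma enorm_phi_circ (k : 'I_m) :
  enorm (@phi Fs n.+1 T (circ_class n k)) = n.+1%:R * Num.sqrt T.+1%:R.
Proof. exact: enorm_phi_uclass (@wl_uniform_circ Fs n k) ord0. Qed.

Lemma phibar_circ_spike t (k k' : 'I_m) :
  @phibar Fs n.+1 T (circ_class n k') (circ_coord Fs n (t, k)) =
  if k' == k then (Num.sqrt T.+1%:R)^-1 else 0.
Proof.
rewrite /phibar phi_circ_spike enorm_phi_circ; case: eqP => _; last by rewrite mul0r.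
by rewrite invfM mulrA divff ?mul1r // pnatr_eq0.
Qed.

Lemma enorm_phibar_circ (k : 'I_m) : enorm (@phibar Fs n.+1 T (circ_class n k)) = 1.
Proof.
by rewrite enorm_normalized // enorm_phi_circ mulf_neq0 ?pnatr_eq0 // sqrtr_eq0 -ltNge ltr0n.
Qed.

End CirculantFamily.

Lemma VCdim_E_WL_ge Fs T n m (lam : R) : (2 * m <= n.+1)%N -> 0 <= lam ->
  lam ^+ 2 * m%:R <= T%:R * n.+1%:R ^+ 2 ->
  (m <= VCdim (Hclass (Num.sqrt T.+1%:R * n.+1%:R)%R lam (@E_WL Fs n.+1 T)))%N.
Proof.
move=> le_m lam_ge0 lam_m.
apply: (VCdim_spikes_ge (circ_class_inj le_m) (@circ_coord_inj Fs n T m le_m)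
                        (phi_circ_spike Fs (T := T) le_m)) => // k.
by rewrite enorm_phi_circ mulrC.
Qed.

Lemma VCdim_Ebar_WL_ge Fs T n m (lam : R) : (2 * m <= n.+1)%N -> 0 <= lam ->
  lam ^+ 2 * m%:R <= T%:R / T.+1%:R ->
  (m <= VCdim (Hclass 1%R lam (@Ebar_WL Fs n.+1 T)))%N.
Proof.
move=> le_m lam_ge0 lam_m.
apply: (VCdim_spikes_ge (circ_class_inj le_m) (@circ_coord_inj Fs n T m le_m)
                        (phibar_circ_spike Fs (T := T) le_m) lam_ge0) => [k|].
  by rewrite enorm_phibar_circ.
by rewrite exprVn sqr_sqrtr.
Qed.

Lemma half_le_truncn (z : R) : 1 <= z -> z / 2 <= (Num.truncn z)%:R.
Proof.
move=> z_ge1; have /andP[_] := truncn_itv (le_trans ler01 z_ge1).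
have : 1 <= (Num.truncn z)%:R :> R by rewrite ler1n truncn_gt0.
rewrite -natr1; lra.
Qed.

Lemma VCdim_E_WL_bounds Fs T n (lam : R) : (0 < T)%N -> 0 < lam ->
  let r := Num.sqrt T.+1%:R * n.+1%:R in
  r ^+ 2 / lam ^+ 2 <= n.+1%:R -> 2 <= r ^+ 2 / lam ^+ 2 ->
  1 / 4 * (r ^+ 2 / lam ^+ 2) <= (VCdim (Hclass r lam (@E_WL Fs n.+1 T)))%:R
  <= 3 * (r ^+ 2 / lam ^+ 2).
Proof.
move=> T_gt0 lam_gt0 r; rewrite {}/r; set x := _ / lam ^+ 2 => le_xn x_ge2.
apply/andP; split; last by apply: VCdim_le; rewrite // -/x; lra.
have lam_x : lam ^+ 2 * x = T.+1%:R * n.+1%:R ^+ 2.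
  by rewrite /x mulrC divfK ?expf_neq0 ?lt0r_neq0 // exprMn sqr_sqrtr.
set m := Num.truncn (x / 2).
have m_le : m%:R <= x / 2 by rewrite truncn_le; lra.
have m_ge : x / 4 <= m%:R by have := @half_le_truncn (x / 2); lra.
have le_m : (2 * m <= n.+1)%N by rewrite -(ler_nat R) natrM; lra.
have lam_m : lam ^+ 2 * m%:R <= T%:R * n.+1%:R ^+ 2.
  have := ler_wpM2l (sqr_ge0 lam) m_le.
  have : 0 <= (T%:R - 1) * n.+1%:R ^+ 2 :> R.
    by apply: mulr_ge0; rewrite ?sqr_ge0 // subr_ge0 ler1n.
  rewrite -natr1 in lam_x; lra.
by have := VCdim_E_WL_ge Fs le_m (ltW lam_gt0) lam_m; rewrite -(ler_nat R); lra.
Qed.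

Lemma VCdim_Ebar_WL_bounds Fs T n (lam : R) : (0 < T)%N -> 0 < lam ->
  let r := Num.sqrt (T%:R / T.+1%:R) in
  r ^+ 2 / lam ^+ 2 <= n.+1%:R -> 4 <= 1 / lam ^+ 2 ->
  1 / 8 * (1 / lam ^+ 2) <= (VCdim (Hclass 1 lam (@Ebar_WL Fs n.+1 T)))%:R
  <= 3 * (1 / lam ^+ 2).
Proof.
move=> T_gt0 lam_gt0 r; rewrite {}/r sqr_sqrtr ?divr_ge0 //.
set r2 := T%:R / _; set y := 1 / lam ^+ 2 => le_n y_ge4.
apply/andP; split; first last.
  have := @VCdim_le _ _ (@phibar Fs n.+1 T) 1 lam lam_gt0.
  by rewrite expr1n -/y; apply; lra.
have r2_ge : 1 / 2 <= r2.
  rewrite /r2 ler_pdivlMr ?ltr0n // -[T.+1%:R]natr1.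
  have : 1 <= T%:R :> R by rewrite ler1n.
  lra.
have {}le_n : r2 * y <= n.+1%:R by rewrite /y mul1r.
have lam_y : lam ^+ 2 * y = 1 by rewrite /y mul1r mulfV ?expf_neq0 ?lt0r_neq0.
set m := Num.truncn (y / 4).
have m_le : m%:R <= y / 4 by rewrite truncn_le; lra.
have m_ge : y / 8 <= m%:R by have := @half_le_truncn (y / 4); lra.
have le_m : (2 * m <= n.+1)%N.
  rewrite -(ler_nat R) natrM.
  have : 0 <= (r2 - 1 / 2) * y by apply: mulr_ge0; lra.
  lra.
have lam_m : lam ^+ 2 * m%:R <= r2 by have := ler_wpM2l (sqr_ge0 lam) m_le; lra.
by have := VCdim_Ebar_WL_ge Fs le_m (ltW lam_gt0) lam_m; rewrite -(ler_nat R); lra.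
Qed.

Theorem corollary5 (Fs : seq anygraph) :
  (exists c1 c2 K : Rdefinitions.R, [/\ 0 < c1, 0 < c2 &
     forall (T n : nat) (lam : Rdefinitions.R), (0 < T)%N -> 0 < lam ->
       let r := Num.sqrt (T.+1)%:R * n%:R in
       r ^+ 2 / lam ^+ 2 <= n%:R -> K <= r ^+ 2 / lam ^+ 2 ->
       c1 * (r ^+ 2 / lam ^+ 2) <= (VCdim (Hclass r lam (@E_WL Fs n T)))%:R
       <= c2 * (r ^+ 2 / lam ^+ 2)]) /\
  (exists c1 c2 K : Rdefinitions.R, [/\ 0 < c1, 0 < c2 &
     forall (T n : nat) (lam : Rdefinitions.R), (0 < T)%N -> 0 < lam ->
       let r := Num.sqrt (T%:R / (T.+1)%:R) in
       r ^+ 2 / lam ^+ 2 <= n%:R -> K <= 1 / lam ^+ 2 ->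
       c1 * (1 / lam ^+ 2) <= (VCdim (Hclass 1 lam (@Ebar_WL Fs n T)))%:R
       <= c2 * (1 / lam ^+ 2)]).
Proof.
split.
- exists (1 / 4), 3, 2; split; [lra | lra |].
  move=> T [|n] lam T_gt0 lam_gt0; last exact: VCdim_E_WL_bounds.
  by rewrite /= mulr0 expr0n mul0r => _ ?; lra.
- exists (1 / 8), 3, 4; split; [lra | lra |].
  move=> T [|n] lam T_gt0 lam_gt0; last exact: (VCdim_Ebar_WL_bounds Fs).
  have ratio_gt0 : 0 < T%:R / T.+1%:R / lam ^+ 2 by rewrite !divr_gt0 ?ltr0n ?exprn_gt0.
  by rewrite /= sqr_sqrtr ?divr_ge0 // => /(lt_le_trans ratio_gt0); rewrite ltxx.
Qed.
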